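(* Let $(X,\mathcal{U})$ be a sequentially complete separated uniform space, with $\mathcal{F}$ and $\mathcal{V}$ as in the context, and let $\preceq$ be a partial order on $X$ with the property: if a nondecreasing sequence $\{x_n\}$ (i.e. $x_n\preceq x_{n+1}$ for all $n$) converges to some $x\in X$, then it has a subsequence $\{x_{n_k}\}$ with $x_{n_k}\preceq x$ for all $k\ge1$. Let $T:X\to X$ be a nondecreasing order Ćirić-contraction. Then $T$ has a fixed point if and only if there exists $x_0\in X$ with $x_0\preceq Tx_0$. Moreover, this fixed point is unique if (i) the functions $a_2$ and $a_3$ in the contractive condition coincide on $X\times X$; and (ii) each two elements of $X$ have either a lower or an upper bound.
   Context: A uniform space $(X,\mathcal{U})$ is a nonempty set $X$ with a uniformity $\mathcal{U}$ on $X$. For $U,V\subseteq X\times X$, $\Delta(X)=\{(x,x):x\in X\}$ and $U\circ V=\{(x,y):\exists z\in X,\ (x,z)\in V,\ (z,y)\in U\}$. $X$ is separated if $\bigcap\mathcal{U}=\Delta(X)$. A sequence $\{x_n\}$ converges to $x$ if for every $U\in\mathcal{U}$ there is $N$ with $(x_n,x)\in U$ for $n\ge N$; it is Cauchy if for every $U\in\mathcal{U}$ there is $N$ with $(x_m,x_n)\in U$ for $m,n\ge N$; $X$ is sequentially complete if every Cauchy sequence converges. $\mathcal{F}$ is a nonempty collection of (uniformly continuous) pseudometrics on $X$ generating $\mathcal{U}$, and $\mathcal{V}$ is the family of all sets $V=\bigcap_{i=1}^m\{(x,y)\in X\times X:\rho_i(x,y)<r_i\}$ with $m\ge1$, $\rho_i\in\mathcal{F}$,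 $r_i>0$; $\mathcal{V}$ is a base for $\mathcal{U}$. For such $V$ and $\beta>0$, $\beta V=\bigcap_{i=1}^m\{(x,y):\rho_i(x,y)<\beta r_i\}$. A map $T:X\to X$ is a nondecreasing order Ćirić-contraction if (a) $x\preceq y$ implies $Tx\preceq Ty$; and (b) there are positive-valued functions $a_1,a_2,a_3,a_4$ on $X\times X$ with $\sup\{a_1(x,y)+a_2(x,y)+a_3(x,y)+2a_4(x,y):x,y\in X\}<1$ such that for all $x,y\in X$ with $x\preceq y$ and all $V_1,\dots,V_5\in\mathcal{V}$: if $(x,y)\in V_1$, $(x,Tx)\in V_2$, $(y,Ty)\in V_3$, $(x,Ty)\in V_4$, $(y,Tx)\in V_5$, then $(Tx,Ty)\in a_1(x,y)V_1\circ a_2(x,y)V_2\circ a_3(x,y)V_3\circ a_4(x,y)V_4\circ a_4(x,y)V_5$. *)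

From Stdlib Require Import Reals List.
Open Scope R_scope.

Definition rel (X : Type) := X -> X -> Prop.

Definition is_pseudometric {X : Type} (d : X -> X -> R) : Prop :=
  (forall x, d x x = 0) /\ (forall x y, 0 <= d x y) /\
  (forall x y, d x y = d y x) /\
  (forall x y z, d x z <= d x y + d y z).

Definition rcomp {X : Type} (U V : rel X) : rel X :=
  fun x y => exists z, V x z /\ U z y.

(* A basic entourage V in the family 𝒱 is given by a data list
   [(rho_1,r_1); ...; (rho_m,r_m)] with m >= 1, rho_i in F, r_i > 0. *)
Definition Vdata {X : Type} (F : (X -> X -> R) -> Prop)
  (l : list ((X -> X -> R) * R)) : Prop :=
  l <> nil /\ (forall p, In p l -> F (fst p) /\ 0 < snd p).

(* beta V = intersection of {(x,y) : rho_i(x,y) < beta r_i};  V = 1 V. *)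
Definition scaledV {X : Type} (beta : R) (l : list ((X -> X -> R) * R)) : rel X :=
  fun x y => forall p, In p l -> fst p x y < beta * snd p.

Definition basicV {X : Type} (l : list ((X -> X -> R) * R)) : rel X :=
  scaledV 1 l.

(* The uniformity 𝒰 generated by F: 𝒱 is a base of 𝒰. *)
Definition entourage {X : Type} (F : (X -> X -> R) -> Prop) (E : rel X) : Prop :=
  exists l, Vdata F l /\ (forall x y, basicV l x y -> E x y).

Definition separated {X : Type} (F : (X -> X -> R) -> Prop) : Prop :=
  forall x y, (forall E, entourage F E -> E x y) <-> x = y.

Definition converges {X : Type} (F : (X -> X -> R) -> Prop)
  (u : nat -> X) (x : X) : Prop :=
  forall E, entourage F E -> exists N, forall n, (N <= n)%nat -> E (u n) x.

Definition cauchy {X : Type} (F : (X -> X -> R) -> Prop) (u : nat -> X) : Prop :=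
  forall E, entourage F E ->
    exists N, forall m n, (N <= m)%nat -> (N <= n)%nat -> E (u m) (u n).

Definition seq_complete {X : Type} (F : (X -> X -> R) -> Prop) : Prop :=
  forall u, cauchy F u -> exists x, converges F u x.

Definition partial_order {X : Type} (le : rel X) : Prop :=
  (forall x, le x x) /\ (forall x y, le x y -> le y x -> x = y) /\
  (forall x y z, le x y -> le y z -> le x z).

Definition order_limit_property {X : Type} (F : (X -> X -> R) -> Prop)
  (le : rel X) : Prop :=
  forall (u : nat -> X) (x : X),
    (forall n, le (u n) (u (S n))) -> converges F u x ->
    exists phi : nat -> nat, (forall k, (phi k < phi (S k))%nat) /\
      (forall k, le (u (phi k)) x).

Definition ciric_contraction {X : Type} (F : (X -> X -> R) -> Prop)
  (le : rel X) (T : X -> X) (a1 a2 a3 a4 : X -> X -> R) : Prop :=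
  (forall x y, le x y -> le (T x) (T y)) /\
  (forall x y, 0 < a1 x y /\ 0 < a2 x y /\ 0 < a3 x y /\ 0 < a4 x y) /\
  (exists c, c < 1 /\ forall x y, a1 x y + a2 x y + a3 x y + 2 * a4 x y <= c) /\
  (forall x y, le x y ->
   forall l1 l2 l3 l4 l5,
     Vdata F l1 -> Vdata F l2 -> Vdata F l3 -> Vdata F l4 -> Vdata F l5 ->
     basicV l1 x y -> basicV l2 x (T x) -> basicV l3 y (T y) ->
     basicV l4 x (T y) -> basicV l5 y (T x) ->
     rcomp (scaledV (a1 x y) l1)
       (rcomp (scaledV (a2 x y) l2)
         (rcomp (scaledV (a3 x y) l3)
           (rcomp (scaledV (a4 x y) l4) (scaledV (a4 x y) l5)))) (T x) (T y)).

From Stdlib Require Import Reals List Lra Lia Psatz.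
Open Scope R_scope.

(* Testing the contractive condition on balls of single pseudometrics turns it
   into the metric Ciric inequality
     rho(Tx,Ty) <= a1 rho(x,y) + a2 rho(x,Tx) + a3 rho(y,Ty) + a4 (rho(x,Ty) + rho(y,Tx))
   for every rho in F and x <= y.  Starting from x0 <= T x0, the Picard orbit is
   nondecreasing, so its consecutive rho-distances decrease geometrically with ratio
   a bound c < 1 of a1 + a2 + a3 + 2 a4; the orbit is Cauchy, and comparing its terms
   below the limit with the limit shows that the limit is fixed.  For uniqueness,
   the orbit of a common lower (or upper) bound of two fixed points stays comparable
   to both, and when a2 = a3 it approaches each of them geometrically. *)

Lemma Rle_mul_of_le_affine p q c d d' :
  0 <= p -> 0 <= q -> p + q <= c -> c < 1 -> 0 <= d ->
  d' <= p * d + q * d' -> d' <= c * d.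
Proof.
  intros Hp Hq Hpq Hc Hd H.
  assert (p * d <= (c - q) * d) by nra.
  assert (0 <= q * d * (1 - c)) by (apply Rmult_le_pos; nra).
  destruct (Rle_dec d' (c * d)) as [|Hn]; [assumption|].
  assert (0 < (d' - c * d) * (1 - q)) by (apply Rmult_lt_0_compat; lra).
  nra.
Qed.

Lemma geometric_bound (s : nat -> R) c :
  0 <= c -> (forall n, s (S n) <= c * s n) -> forall n, s n <= c ^ n * s O.
Proof.
  intros Hc Hs n; induction n as [|n IH]; simpl; [lra|].
  specialize (Hs n); nra.
Qed.

Lemma pow_mul_lt_eventually c M eps :
  0 <= c -> c < 1 -> 0 <= M -> 0 < eps ->
  exists N, forall n, (N <= n)%nat -> c ^ n * M < eps.
Proof.
  intros Hc0 Hc1 HM Heps.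
  destruct (pow_lt_1_zero c) with (y := eps / (M + 1)) as [N HN].
  - rewrite Rabs_right; lra.
  - apply Rdiv_lt_0_compat; lra.
  - exists N; intros n Hn.
    specialize (HN n Hn); rewrite Rabs_right in HN by (apply Rle_ge, pow_le; lra).
    assert (Hpow : 0 <= c ^ n) by (apply pow_le; lra).
    assert (c ^ n * (M + 1) < eps) by
      (apply (Rmult_lt_compat_r (M + 1)) in HN; [field_simplify in HN|]; lra).
    nra.
Qed.

Section Pseudometric.

Variables (X : Type) (rho : X -> X -> R).
Hypothesis Hrho : is_pseudometric rho.

Lemma dist_shift_le (u : nat -> X) c :
  0 <= c -> c < 1 ->
  (forall k, rho (u (S k)) (u (S (S k))) <= c * rho (u k) (u (S k))) ->
  forall m j, (1 - c) * rho (u m) (u (m + j)%nat) <= c ^ m * rho (u O) (u (S O)).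
Proof.
  destruct Hrho as [h0 [hp [_ ht]]]; intros Hc0 Hc1 Hstep m j.
  set (D := rho (u O) (u (S O))).
  assert (Hgeo : forall k, rho (u k) (u (S k)) <= c ^ k * D)
    by exact (geometric_bound (fun k => rho (u k) (u (S k))) c Hc0 Hstep).
  assert (HD : 0 <= D) by apply hp.
  assert (Hcm : 0 <= c ^ m) by (apply pow_le; lra).
  (* Telescoping the geometric series gives the sharper bound c^m D (1 - c^j). *)
  enough (Htel : (1 - c) * rho (u m) (u (m + j)%nat) <= c ^ m * D * (1 - c ^ j)).
  { assert (0 <= c ^ m * D * c ^ j) by (apply Rmult_le_pos; [nra|apply pow_le; lra]).
    lra. }
  induction j as [|j IH].
  - rewrite Nat.add_0_r, h0; simpl; lra.
  - rewrite Nat.add_succ_r.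
    pose proof (ht (u m) (u (m + j)%nat) (u (S (m + j)))) as Htri.
    pose proof (Hgeo (m + j)%nat) as Hj; rewrite pow_add in Hj.
    apply (Rmult_le_compat_l (1 - c)) in Htri, Hj; try lra.
    simpl; lra.
Qed.

Lemma cauchy_of_geometric_steps (u : nat -> X) c :
  0 <= c -> c < 1 ->
  (forall k, rho (u (S k)) (u (S (S k))) <= c * rho (u k) (u (S k))) ->
  forall r, 0 < r ->
  exists N, forall m n, (N <= m)%nat -> (N <= n)%nat -> rho (u m) (u n) < r.
Proof.
  intros Hc0 Hc1 Hstep r Hr.
  pose proof Hrho as [_ [hp [hs _]]].
  destruct (pow_mul_lt_eventually c (rho (u O) (u (S O))) (r * (1 - c)))
    as [N HN]; try apply hp; try nra.
  assert (Hfwd : forall m j, (N <= m)%nat -> rho (u m) (u (m + j)%nat) < r).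
  { intros m j Hm.
    pose proof (dist_shift_le u c Hc0 Hc1 Hstep m j).
    pose proof (HN m Hm). nra. }
  exists N; intros m n Hm Hn.
  destruct (Nat.le_ge_cases m n) as [Hmn|Hnm].
  - replace n with (m + (n - m))%nat by lia; auto.
  - rewrite hs; replace m with (n + (m - n))%nat by lia; auto.
Qed.

Lemma dist_eq0_of_common_attractor (w : nat -> X) u v c :
  0 <= c -> c < 1 ->
  (forall n, rho (w (S n)) u <= c * rho (w n) u) ->
  (forall n, rho (w (S n)) v <= c * rho (w n) v) ->
  rho u v = 0.
Proof.
  destruct Hrho as [_ [hp [hs ht]]]; intros Hc0 Hc1 Hu Hv.
  pose proof (geometric_bound (fun n => rho (w n) u) c Hc0 Hu) as Hgu.
  pose proof (geometric_bound (fun n => rho (w n) v) c Hc0 Hv) as Hgv.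
  simpl in Hgu, Hgv.
  apply Rle_antisym; [|apply hp].
  apply Rle_plus_epsilon; intros e He.
  destruct (pow_mul_lt_eventually c (rho (w O) u + rho (w O) v) e) as [N HN];
    try (pose proof (hp (w O) u); pose proof (hp (w O) v)); try lra.
  specialize (HN N (le_n N)); specialize (Hgu N); specialize (Hgv N).
  pose proof (ht u (w N) v) as Htri; rewrite (hs u (w N)) in Htri.
  lra.
Qed.

End Pseudometric.

Section Uniformity.

Variables (X : Type) (F : (X -> X -> R) -> Prop).

Lemma Vdata_single rho r : F rho -> 0 < r -> Vdata F ((rho, r) :: nil).
Proof.
  intros Hr Hpos; split; [discriminate|].
  intros p [<-|[]]; simpl; auto.
Qed.

Lemma scaledV_single beta (rho : X -> X -> R) r (x y : X) :
  scaledV beta ((rho, r) :: nil) x y <-> rho x y < beta * r.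
Proof.
  split.
  - intros H; exact (H (rho, r) (or_introl eq_refl)).
  - intros H p [<-|[]]; exact H.
Qed.

Lemma entourage_ball rho r :
  F rho -> 0 < r -> entourage F (fun x y => rho x y < r).
Proof.
  intros Hr Hpos; exists ((rho, r) :: nil); split.
  - now apply Vdata_single.
  - intros x y H; apply scaledV_single in H; lra.
Qed.

Lemma eq_of_dist_eq0 x y :
  separated F -> (forall rho, F rho -> rho x y = 0) -> x = y.
Proof.
  intros Hsep H0; apply (proj1 (Hsep x y)).
  intros E [l [[_ Hl] HE]]; apply HE; intros p Hp.
  destruct (Hl p Hp) as [Hp1 Hp2]; rewrite (H0 _ Hp1); lra.
Qed.

Lemma eventually2_in_list {A : Type} (l : list A) (Q : A -> nat -> nat -> Prop) :
  (forall a, In a l ->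
     exists N, forall m n, (N <= m)%nat -> (N <= n)%nat -> Q a m n) ->
  exists N, forall m n, (N <= m)%nat -> (N <= n)%nat -> forall a, In a l -> Q a m n.
Proof.
  induction l as [|b l IH]; intros H.
  - exists O; intros _ _ _ _ a [].
  - destruct (H b (or_introl eq_refl)) as [N1 H1].
    destruct IH as [N2 H2]; [intros a Ha; apply H; now right|].
    exists (max N1 N2); intros m n Hm Hn a [<-|Ha].
    + apply H1; lia.
    + apply H2; auto; lia.
Qed.

Lemma cauchy_of_dist_cauchy (u : nat -> X) :
  (forall rho, F rho -> forall r, 0 < r ->
     exists N, forall m n, (N <= m)%nat -> (N <= n)%nat -> rho (u m) (u n) < r) ->
  cauchy F u.
Proof.
  intros Hu E [l [[_ Hl] HE]].
  destruct (eventually2_in_list l (fun p m n => fst p (u m) (u n) < snd p))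
    as [N HN].
  { intros p Hp; destruct (Hl p Hp); auto. }
  exists N; intros m n Hm Hn; apply HE; intros p Hp.
  rewrite Rmult_1_l; auto.
Qed.

Lemma converges_dist (u : nat -> X) x rho r :
  converges F u x -> F rho -> 0 < r ->
  exists N, forall n, (N <= n)%nat -> rho (u n) x < r.
Proof. intros Hu Hr Hpos; exact (Hu _ (entourage_ball rho r Hr Hpos)). Qed.

End Uniformity.

Lemma ciric_dist_ineq X F (le : rel X) T a1 a2 a3 a4 :
  ciric_contraction F le T a1 a2 a3 a4 ->
  forall rho, F rho -> is_pseudometric rho -> forall x y, le x y ->
  rho (T x) (T y) <= a1 x y * rho x y + a2 x y * rho x (T x) + a3 x y * rho y (T y)
                     + a4 x y * (rho x (T y) + rho y (T x)).
Proof.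
  intros [_ [Hpos [[c [Hc1 Hsum]] Hcon]]] rho Hr [_ [hp [_ ht]]] x y Hxy.
  destruct (Hpos x y) as [p1 [p2 [p3 p4]]]; specialize (Hsum x y).
  apply Rle_plus_epsilon; intros e He.
  set (B a b := (rho, rho a b + e) :: nil).
  assert (HV : forall a b, Vdata F (B a b)).
  { intros a b; apply Vdata_single; [exact Hr|]; pose proof (hp a b); lra. }
  assert (HB : forall a b, basicV (B a b) a b).
  { intros a b; apply scaledV_single; lra. }
  destruct (Hcon x y Hxy (B x y) (B x (T x)) (B y (T y)) (B x (T y)) (B y (T x))
              (HV _ _) (HV _ _) (HV _ _) (HV _ _) (HV _ _)
              (HB _ _) (HB _ _) (HB _ _) (HB _ _) (HB _ _))
    as [z1 [[z2 [[z3 [[z4 [H5 H4]] H3]] H2]] H1]].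
  apply scaledV_single in H1; apply scaledV_single in H2;
  apply scaledV_single in H3; apply scaledV_single in H4; apply scaledV_single in H5.
  pose proof (ht (T x) z4 (T y)); pose proof (ht z4 z3 (T y));
  pose proof (ht z3 z2 (T y)); pose proof (ht z2 z1 (T y)).
  nra.
Qed.

Section CiricFixedPoint.

Variables (X : Type) (F : (X -> X -> R) -> Prop) (le : rel X) (T : X -> X)
          (a1 a2 a3 a4 : X -> X -> R) (c : R).

Hypothesis HF : forall rho, F rho -> is_pseudometric rho.
Hypothesis Hpos : forall x y, 0 < a1 x y /\ 0 < a2 x y /\ 0 < a3 x y /\ 0 < a4 x y.
Hypothesis Hsum : forall x y, a1 x y + a2 x y + a3 x y + 2 * a4 x y <= c.
Hypothesis Hc0 : 0 <= c.
Hypothesis Hc1 : c < 1.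
Hypothesis Hmono : forall x y, le x y -> le (T x) (T y).
Hypothesis Hciric : forall rho, F rho -> forall x y, le x y ->
  rho (T x) (T y) <= a1 x y * rho x y + a2 x y * rho x (T x) + a3 x y * rho y (T y)
                     + a4 x y * (rho x (T y) + rho y (T x)).

Lemma orbit_step_contraction rho x :
  F rho -> le x (T x) -> rho (T x) (T (T x)) <= c * rho x (T x).
Proof.
  intros Hr Hx; destruct (HF rho Hr) as [h0 [hp [_ ht]]].
  pose proof (Hciric rho Hr x (T x) Hx) as H; rewrite h0 in H.
  destruct (Hpos x (T x)) as [p1 [p2 [p3 p4]]]; specialize (Hsum x (T x)).
  pose proof (ht x (T x) (T (T x))).
  apply (Rle_mul_of_le_affine (a1 x (T x) + a2 x (T x) + a4 x (T x))
                              (a3 x (T x) + a4 x (T x))); try apply hp; nra.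
Qed.

Lemma fixed_point_defect_bound rho x y :
  F rho -> le x y -> (1 - c) * rho y (T y) <= 2 * (rho x y + rho (T x) y).
Proof.
  intros Hr Hxy; destruct (HF rho Hr) as [_ [hp [hs ht]]].
  pose proof (Hciric rho Hr x y Hxy) as H.
  destruct (Hpos x y) as [p1 [p2 [p3 p4]]]; specialize (Hsum x y).
  pose proof (hp x y); pose proof (hp (T x) y); pose proof (hp y (T y)).
  pose proof (ht y (T x) (T y)); pose proof (ht x y (T y)); pose proof (ht x y (T x)).
  rewrite (hs y (T x)) in *.
  nra.
Qed.

Lemma iter_comparable_fixed_point y z n :
  T y = y -> le z y \/ le y z -> le (Nat.iter n T z) y \/ le y (Nat.iter n T z).
Proof.
  intros Hy Hz; induction n as [|n IH]; [exact Hz|].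
  simpl; rewrite <- Hy; destruct IH; [left|right]; now apply Hmono.
Qed.

Lemma dist_to_fixed_point_contraction rho x y :
  (forall x y, a2 x y = a3 x y) -> F rho -> T y = y -> le x y \/ le y x ->
  rho (T x) y <= c * rho x y.
Proof.
  intros Ha23 Hr Hy Hcomp; destruct (HF rho Hr) as [h0 [hp [hs ht]]].
  pose proof (ht x y (T x)) as Htri; rewrite (hs y (T x)) in Htri.
  destruct Hcomp as [Hxy|Hyx].
  - pose proof (Hciric rho Hr x y Hxy) as H; rewrite Hy, h0, (hs y (T x)) in H.
    destruct (Hpos x y) as [p1 [p2 [p3 p4]]]; specialize (Hsum x y).
    rewrite Ha23 in Hsum, p2, H.
    apply (Rle_mul_of_le_affine (a1 x y + a3 x y + a4 x y) (a3 x y + a4 x y));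
      try apply hp; nra.
  - pose proof (Hciric rho Hr y x Hyx) as H; rewrite Hy, h0, (hs y x), (hs y (T x)) in H.
    destruct (Hpos y x) as [p1 [p2 [p3 p4]]]; specialize (Hsum y x).
    rewrite Ha23 in Hsum, p2.
    apply (Rle_mul_of_le_affine (a1 y x + a3 y x + a4 y x) (a3 y x + a4 y x));
      try apply hp; nra.
Qed.

Lemma fixed_point_of_le_image x0 :
  separated F -> seq_complete F -> order_limit_property F le ->
  le x0 (T x0) -> exists x, T x = x.
Proof.
  intros Hsep Hcomp Hol Hx0.
  set (u n := Nat.iter n T x0).
  assert (Hmon : forall n, le (u n) (u (S n))).
  { induction n as [|n IH]; [exact Hx0|]; now apply Hmono. }
  assert (Hcau : cauchy F u).
  { apply cauchy_of_dist_cauchy; intros rho Hr.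
    apply (cauchy_of_geometric_steps X rho (HF rho Hr) u c Hc0 Hc1).
    intros k; exact (orbit_step_contraction rho (u k) Hr (Hmon k)). }
  destruct (Hcomp u Hcau) as [xs Hxs].
  destruct (Hol u xs Hmon Hxs) as [phi [Hphi Hle]].
  assert (Hphi_ge : forall k, (k <= phi k)%nat).
  { induction k as [|k IH]; [lia|]; specialize (Hphi k); lia. }
  exists xs; apply (eq_of_dist_eq0 X F _ _ Hsep); intros rho Hr.
  destruct (HF rho Hr) as [_ [hp [hs _]]].
  rewrite hs; apply Rle_antisym; [|apply hp].
  apply Rnot_lt_le; intros HD.
  assert (HK : 0 < (1 - c) * rho xs (T xs)) by (apply Rmult_lt_0_compat; lra).
  destruct (converges_dist X F u xs rho ((1 - c) * rho xs (T xs) / 8) Hxs Hr)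
    as [N HN]; [lra|].
  pose proof (Hphi_ge N).
  pose proof (HN (phi N) ltac:(lia)); pose proof (HN (S (phi N)) ltac:(lia)).
  pose proof (fixed_point_defect_bound rho (u (phi N)) xs Hr (Hle N)).
  simpl in *; lra.
Qed.

Lemma fixed_point_unique u v :
  separated F -> (forall x y, a2 x y = a3 x y) ->
  (forall x y, (exists z, le z x /\ le z y) \/ (exists z, le x z /\ le y z)) ->
  T u = u -> T v = v -> u = v.
Proof.
  intros Hsep Ha23 Hbound Hu Hv.
  assert (Hz : exists z, (le z u \/ le u z) /\ (le z v \/ le v z)).
  { destruct (Hbound u v) as [[z [Hzu Hzv]]|[z [Hzu Hzv]]]; exists z; auto. }
  destruct Hz as [z [Hzu Hzv]].
  apply (eq_of_dist_eq0 X F _ _ Hsep); intros rho Hr.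
  apply (dist_eq0_of_common_attractor X rho (HF rho Hr) (fun n => Nat.iter n T z)
           u v c Hc0 Hc1); intros n;
    apply (dist_to_fixed_point_contraction rho); auto;
    apply iter_comparable_fixed_point; auto.
Qed.

End CiricFixedPoint.

Theorem corollary2 (X : Type) (F : (X -> X -> R) -> Prop)
  (le : X -> X -> Prop) (T : X -> X) (a1 a2 a3 a4 : X -> X -> R) :
  inhabited X ->
  (exists rho, F rho) ->
  (forall rho, F rho -> is_pseudometric rho) ->
  separated F ->
  seq_complete F ->
  partial_order le ->
  order_limit_property F le ->
  ciric_contraction F le T a1 a2 a3 a4 ->
  ((exists x, T x = x) <-> (exists x0, le x0 (T x0))) /\
  ((forall x y, a2 x y = a3 x y) ->
   (forall x y, (exists z, le z x /\ le z y) \/ (exists z, le x z /\ le y z)) ->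
   forall u v, T u = u -> T v = v -> u = v).
Proof.
  intros [w] _ HF Hsep Hcomp [Hrefl _] Hol Hcc.
  pose proof Hcc as [Hmono [Hpos [[c [Hc1 Hsum]] _]]].
  assert (Hc0 : 0 <= c).
  { destruct (Hpos w w) as [p1 [p2 [p3 p4]]]; specialize (Hsum w w); lra. }
  pose proof (fun rho Hr => ciric_dist_ineq X F le T a1 a2 a3 a4 Hcc rho Hr (HF rho Hr))
    as Hciric.
  split; [split|].
  - intros [x Hx]; exists x; rewrite Hx; apply Hrefl.
  - intros [x0 Hx0].
    exact (fixed_point_of_le_image X F le T a1 a2 a3 a4 c HF Hpos Hsum Hc0 Hc1
             Hmono Hciric x0 Hsep Hcomp Hol Hx0).
  - intros Ha23 Hbound u v Hu Hv.
    exact (fixed_point_unique X F le T a1 a2 a3 a4 c HF Hpos Hsum Hc0 Hc1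
             Hmono Hciric u v Hsep Ha23 Hbound Hu Hv).
Qed.
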